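(* Let $I$ be a BPPS instance with $d$ scenarios and let $\hat I$ be the instance obtained from $I$ by replacing small items as described in the context. Then $\mathrm{OPT}(\hat I)\le(1+2^{d+1}(d+1)\varepsilon)\,\mathrm{OPT}(I)+1$.
   Context: A BPPS instance has $d$ scenarios, items $\mathcal{I}$, each item $i$ with size $s_i$ and type (scenario set) $\mathcal{K}_i\subseteq\{1,\dots,d\}$, and bins of capacity $1$; $S_k=\{i:k\in\mathcal{K}_i\}$. A solution is a partition $\mathcal{B}$ of the items with $\sum_{i\in B\cap S_k}s_i\le1$ for all $B\in\mathcal{B}$ and all $k$, of value $\max_k|\{B\in\mathcal{B}:B\cap S_k\ne\emptyset\}|$; $\mathrm{OPT}$ is the minimum value. $\mathcal{T}$ is the set of all types. Fix $\varepsilon\in(0,1/4]$ with $1/\varepsilon$ an integer. Let $\mathcal{L}=\{i\in\mathcal{I}:s_i\ge\varepsilon^2\}$ and $\mathcal{S}=\mathcal{I}\setminus\mathcal{L}$; for $t\in\mathcal{T}$ let $\mathcal{S}_t$ be the items of $\mathcal{S}$ of type $t$, and let $\hat{\mathcal{S}}_t$ be a set of $\lceil\sum_{i\in\mathcal{S}_t}s_i/(\varepsilon-\varepsilon^2)\rceil$ new items, each of size $\varepsilon$ and type $t$. $\hat I$ is the instance with $d$ scenarios and item set $\mathcal{L}\cup\bigcup_{t\in\mathcal{T}}\hat{\mathcal{S}}_t$ (items of $\mathcal{L}$ keep their sizes and types). *)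

From HB Require Import structures.
From mathcomp Require Import all_boot all_order all_algebra.
Set Implicit Arguments. Unset Strict Implicit. Unset Printing Implicit Defensive.
Import Order.TTheory GRing.Theory Num.Theory.
Local Open Scope ring_scope.

(* A BPPS instance with d scenarios: a finite type of items I, sizes
   s : I -> R, and types K : I -> {set 'I_d} (scenarios are 'I_d). *)

Definition load (R : numDomainType) (d : nat) (I : finType)
  (s : I -> R) (K : I -> {set 'I_d}) (B : {set I}) (k : 'I_d) : R :=
  \sum_(i in B | k \in K i) s i.

Definition feasible (R : numDomainType) (d : nat) (I : finType)
  (s : I -> R) (K : I -> {set 'I_d}) (P : {set {set I}}) : bool :=
  partition P [set: I] &&
  [forall B in P, forall k : 'I_d, load s K B k <= 1].

Definition value (d : nat) (I : finType) (K : I -> {set 'I_d})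
  (P : {set {set I}}) : nat :=
  \max_(k : 'I_d) #|[set B in P | [exists i in B, k \in K i]]|.

(* OPT: minimum value over all feasible solutions (the default #|I| is never
   attained when a feasible solution exists, since any value is <= #|I|). *)
Definition OPT (R : numDomainType) (d : nat) (I : finType)
  (s : I -> R) (K : I -> {set 'I_d}) : nat :=
  \big[minn/#|I|]_(P : {set {set I}} | feasible s K P) value K P.

Definition nnew (R : archiRealFieldType) (d : nat) (I : finType)
  (s : I -> R) (K : I -> {set 'I_d}) (eps : R) (t : {set 'I_d}) : nat :=
  absz (Num.ceil ((\sum_(i | (s i < eps ^+ 2) && (K i == t)) s i)
                  / (eps - eps ^+ 2))%R).

Definition large (R : archiRealFieldType) (I : finType) (s : I -> R) (eps : R) :=
  {i : I | eps ^+ 2 <= s i}.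

Definition hat_items (R : archiRealFieldType) (d : nat) (I : finType)
  (s : I -> R) (K : I -> {set 'I_d}) (eps : R) : finType :=
  (large s eps + {t : {set 'I_d} & 'I_(nnew s K eps t)})%type.

Definition hat_size (R : archiRealFieldType) (d : nat) (I : finType)
  (s : I -> R) (K : I -> {set 'I_d}) (eps : R) (x : hat_items s K eps) : R :=
  match x with
  | inl i => s (val i)
  | inr _ => eps
  end.

Definition hat_type (R : archiRealFieldType) (d : nat) (I : finType)
  (s : I -> R) (K : I -> {set 'I_d}) (eps : R) (x : hat_items s K eps)
  : {set 'I_d} :=
  match x with
  | inl i => K (val i)
  | inr t => tag t
  end.

From HB Require Import structures.
From mathcomp Require Import all_boot all_order all_algebra.
From mathcomp Require Import zify.
From mathcomp.algebra_tactics Require Import ring lra.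
Import Order.TTheory GRing.Theory Num.Theory.

(* Start from an optimal packing P of I. In a bin B of P, the small items of
   type t have total size a(B,t); reserve floor(a(B,t)/eps) slots of size eps
   there for the new items of type t, which keeps every scenario load of B
   at most 1. Since ceil(S_t/(eps-eps^2)) <= S_t/eps + 2 S_t + 1, where S_t is
   the total size of small items of type t, at most 2 S_t + 2 N_t new items of
   type t find no slot, N_t being the number of bins of P holding a small item
   of type t. For nonempty t we have N_t <= OPT(I), and the S_t sum to at most
   d OPT(I), so at most 2^(d+1) (d+1) OPT(I) items are left over; packed 1/eps
   to an extra bin, they add at most eps 2^(d+1) (d+1) OPT(I) + 1 bins to every
   scenario. *)

Set Implicit Arguments.
Unset Strict Implicit.
Unset Printing Implicit Defensive.

Section FillBins.
Variables (X J : finType).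

Lemma card_setD1_cond (A : {set X}) x0 (p : pred X) : x0 \in A ->
  #|[set x in A | p x]| = p x0 + #|[set x in A :\ x0 | p x]|.
Proof.
move=> Ax0; rewrite (cardsD1 x0) inE Ax0; congr (_ + _).
by apply: eq_card => x; rewrite !inE andbA.
Qed.

Lemma fill_bins (A : {set X}) (c : J -> nat) :
  exists g : X -> option J,
    (forall j, #|[set x in A | g x == Some j]| <= c j) /\
    #|[set x in A | g x == None]| <= #|A| - \sum_j c j.
Proof.
have [n leAn] := ubnP #|A|; elim: n => // n IHn in A c leAn *.
have nothing_placed : #|A| = 0 \/ \sum_j c j = 0 ->
    exists g : X -> option J, (forall j, #|[set x in A | g x == Some j]| <= c j) /\
    #|[set x in A | g x == None]| <= #|A| - \sum_j c j.
  move=> A0_or_c0; exists (fun _ => None); split => [j|].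
    by rewrite (eq_card (_ : _ =i pred0)) ?card0 // => x; rewrite !inE andbF.
  by rewrite (eq_card (_ : _ =i A)) => [|x]; rewrite ?inE ?andbT //; lia.
have [A0|[x0 Ax0]] := set_0Vmem A; first by apply: nothing_placed; rewrite A0 cards0; left.
have [j0 cj0|c0] := pickP (fun j => 0 < c j); last first.
  by apply: nothing_placed; right; apply: big1 => j _; have := c0 j; case: (c j).
pose c' j := c j - (j == j0).
have sum_c' : \sum_j c j = (\sum_j c' j).+1.
  rewrite (bigD1 j0) // [in RHS](bigD1 j0) //= /c' eqxx -addSn; congr (_ + _); first by lia.
  by apply: eq_bigr => j /negbTE ->; rewrite subn0.
have [|g' [g'_fill g'_left]] := IHn (A :\ x0) c'.
  by move: leAn; rewrite (cardsD1 x0) Ax0.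
exists (fun x => if x == x0 then Some j0 else g' x).
have g'_off (v : option J) :
    #|[set x in A :\ x0 | (if x == x0 then Some j0 else g' x) == v]| =
    #|[set x in A :\ x0 | g' x == v]|.
  by apply: eq_card => x; rewrite !inE; case: eqP.
split => [j|]; rewrite (card_setD1_cond _ Ax0) eqxx g'_off.
  by have := g'_fill j; rewrite /c' (inj_eq Some_inj) eq_sym; case: eqP => [<-|]; lia.
by move: g'_left (cardsD1 x0 A); rewrite Ax0 sum_c' /=; lia.
Qed.

Lemma fill_bins_by_colour (C : finType) (col : X -> C) (c : J -> C -> nat) :
  exists g : X -> option J,
    (forall j t, #|[set x | (col x == t) && (g x == Some j)]| <= c j t) /\
    (forall t, #|[set x | (col x == t) && (g x == None)]| <=
               #|[set x | col x == t]| - \sum_j c j t).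
Proof.
have /fin_all_exists [g gP] t := fill_bins [set x | col x == t] (c^~ t).
have restrict (t : C) (p : pred (option J)) :
    #|[set x | (col x == t) && p (g (col x) x)]| <=
    #|[set x in [set x | col x == t] | p (g t x)]|.
  by apply/subset_leq_card/subsetP => x; rewrite !inE => /andP [/eqP <- ->]; rewrite eqxx.
exists (fun x => g (col x) x); split => [j t | t].
  exact: leq_trans (restrict t (pred1 (Some j))) ((gP t).1 j).
exact: leq_trans (restrict t (pred1 None)) (gP t).2.
Qed.

End FillBins.

Lemma split_into_chunks (X : finType) (A : {set X}) m : 0 < m ->
  exists g : X -> 'I_(#|A| %/ m).+1, forall j, #|[set x in A | g x == j]| <= m.
Proof.
move=> m_gt0; have [g [g_fill g_left]] := fill_bins A (fun _ : 'I_(#|A| %/ m).+1 => m).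
have g_total x : x \in A -> g x != None.
  move=> Ax; apply: contraTneq g_left => gx; rewrite -ltnNge sum_nat_const card_ord.
  have -> : #|A| - (#|A| %/ m).+1 * m = 0 by apply/eqP; rewrite subn_eq0 ltnW // ltn_ceil.
  by rewrite card_gt0; apply/set0Pn; exists x; rewrite inE Ax gx.
exists (fun x => odflt ord0 (g x)) => j; apply: leq_trans (g_fill j).
apply/subset_leq_card/subsetP => x; rewrite !inE => /andP [Ax /eqP <-]; rewrite Ax /=.
by case: (g x) (g_total x Ax).
Qed.

Local Open Scope ring_scope.

Lemma sum_const_le (R : numDomainType) (T : finType) (Q : pred T) (e : R) n :
  0 <= e -> (#|Q| <= n)%N -> \sum_(x | Q x) e <= n%:R * e.
Proof. by move=> e_ge0 Qn; rewrite sumr_const -[e *+ _]mulr_natl ler_wpM2r // ler_nat. Qed.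

Lemma card_set (T : finType) : #|{set T}| = (2 ^ #|T|)%N.
Proof. by rewrite -[#|{set T}|]cardsT -powersetT card_powerset cardsT. Qed.

Lemma card_set_sum (A B : finType) (S : {set A + B}) :
  #|S| = (#|[set a | inl a \in S]| + #|[set b | inr b \in S]|)%N.
Proof. by rewrite -sum1_card big_sumType !sum1dep_card. Qed.

Section Solutions.
Variables (R : numDomainType) (d : nat) (X : finType).
Variables (sz : X -> R) (T : X -> {set 'I_d}).

Lemma feasible_preim_partition (J : finType) (g : X -> J) :
  (forall j k, \sum_(x | (g x == j) && (k \in T x)) sz x <= 1) ->
  feasible sz T (preim_partition g [set: X]).
Proof.
move=> load_g; rewrite /feasible preim_partitionP /=.
apply/forall_inP => _ /imsetP [x _ ->]; apply/forallP => k.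
rewrite /load (eq_bigl (fun y => (g y == g x) && (k \in T y))) ?load_g // => y.
by rewrite !inE eq_sym.
Qed.

Lemma OPT_le_value P : feasible sz T P -> (OPT sz T <= value T P)%N.
Proof. by move=> fP; rewrite /OPT -minEnat -leEnat bigmin_le_cond. Qed.

Lemma value_le_card P : feasible sz T P -> (value T P <= #|X|)%N.
Proof.
case/andP => partP _; have /and3P [_ _ P0] := partP.
apply: (@leq_trans #|P|).
  by apply/bigmax_leqP => k _; apply/subset_leq_card/subsetP => B; rewrite inE => /andP [].
rewrite -cardsT (card_partition partP) -sum1_card; apply: leq_sum => B PB.
by rewrite card_gt0; apply: contraNneq P0 => <-.
Qed.

Lemma OPT_attained : (forall x, sz x <= 1) ->
  exists2 P, feasible sz T P & value T P = OPT sz T.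
Proof.
move=> sz_le1.
have id_feasible : feasible sz T (preim_partition id [set: X]).
  apply: feasible_preim_partition => j k.
  by rewrite big_mkcondr big_pred1_eq; case: ifP.
rewrite /OPT -minEnat (bigmin_eq_arg _ _ _ _ id_feasible) => [|P /value_le_card] //.
by eexists; last reflexivity; case: arg_minP.
Qed.

Lemma OPT_le_labelling (J : finType) (g : X -> J) :
  (forall j k, \sum_(x | (g x == j) && (k \in T x)) sz x <= 1) ->
  (OPT sz T <= \max_k #|[set j | [exists x, (g x == j) && (k \in T x)]]|)%N.
Proof.
move=> load_g; apply: leq_trans (OPT_le_value (feasible_preim_partition load_g)) _.
apply/bigmax_leqP => k _; apply: leq_trans (leq_bigmax k).
apply: leq_trans (leq_imset_card (fun j => [set x in [set: X] | j == g x]) _).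
apply/subset_leq_card/subsetP => _ /setIdP [/imsetP [x _ ->] /existsP [y /andP]].
rewrite !inE => -[/eqP gy ky]; apply/imsetP; exists (g y); last by rewrite gy.
by rewrite inE; apply/existsP; exists y; rewrite eqxx.
Qed.
End Solutions.

Lemma ler_div_sub_sqr (R : realFieldType) (x e : R) : 0 <= x -> 0 < e -> e <= 2^-1 ->
  x / (e - e ^+ 2) <= x / e + 2 * x.
Proof.
move=> x_ge0 e_gt0 e_le; have e1 : 0 < 1 - e by lra.
have e2 : 0 < e - e ^+ 2 by rewrite expr2; nra.
have -> : x / (e - e ^+ 2) = x / e + x / (1 - e).
  by field; rewrite !lt0r_neq0.
rewrite lerD2l ler_pdivrMr //; nra.
Qed.

Section Rounding.
Variables (R : archiRealFieldType) (d : nat) (I : finType).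
Variables (s : I -> R) (K : I -> {set 'I_d}) (eps : R).
Hypothesis s_gt0 : forall i, 0 < s i.
Hypothesis eps_gt0 : 0 < eps.
Hypothesis eps_le_half : eps <= 2^-1.
Variable P : {set {set I}}.
Hypothesis P_feasible : feasible s K P.

Let small i := s i < eps ^+ 2.
Let hit k (B : {set I}) := [exists i in B, k \in K i].
Let v := value K P.
Let has_small (B : {set I}) (t : {set 'I_d}) := [exists i in B, small i && (K i == t)].
Let small_load (B : {set I}) (t : {set 'I_d}) := \sum_(i in B | small i && (K i == t)) s i.
Let slots (B : {set I}) (t : {set 'I_d}) :=
  if B \in P then Num.truncn (small_load B t / eps) else 0%N.
Let small_volume (t : {set 'I_d}) := \sum_(i | small i && (K i == t)) s i.
Let bins_with_small (t : {set 'I_d}) := #|[set B in P | has_small B t]|.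

Let P_partition : partition P [set: I]. Proof. by case/andP: P_feasible. Qed.
Let P_cover : cover P = [set: I]. Proof. by case/and3P: P_partition => /eqP. Qed.
Let P_trivI : trivIset P. Proof. by case/and3P: P_partition. Qed.
Let P_load B k : B \in P -> load s K B k <= 1.
Proof. by case/andP: P_feasible => _ /forall_inP load1 /load1 /forallP. Qed.

Lemma card_hit_le_value k : (#|[set B in P | hit k B]| <= v)%N.
Proof. exact: (leq_bigmax k). Qed.

Lemma slots_le B t : (slots B t)%:R * eps <= small_load B t.
Proof.
have load_ge0 : 0 <= small_load B t by apply: sumr_ge0 => i _; apply: ltW.
rewrite /slots; case: ifP => _; last by rewrite mul0r.
by rewrite -ler_pdivlMr // truncn_le divr_ge0 // ltW.
Qed.

Lemma small_load_eq0 B t : ~~ has_small B t -> small_load B t = 0.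
Proof. by move=> /existsPn none; apply: big_pred0 => i; exact/negbTE/none. Qed.

Lemma slots_gt0 B t : (0 < slots B t)%N -> B \in P /\ has_small B t.
Proof.
rewrite /slots; case: ifP => // PB pos; split => //.
by move: pos; apply: contraTT => /small_load_eq0 ->; rewrite mul0r truncn0.
Qed.

Lemma small_volume_bins t : small_volume t = \sum_(B in P) small_load B t.
Proof.
by rewrite -(big_trivIset_cond _ P_trivI) P_cover; apply: eq_bigl => i; rewrite inE.
Qed.

Lemma sum_slots_ge t :
  small_volume t / eps - (bins_with_small t)%:R <= (\sum_B slots B t)%:R.
Proof.
rewrite small_volume_bins mulr_suml natr_sum [in X in _ <= X](bigID [in P]) /=.
rewrite [X in _ <= _ + X]big1 => [|B /negbTE PB]; last by rewrite /slots PB.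
rewrite addr0 /bins_with_small -sum1dep_card natr_sum big_mkcondr -sumrB /=.
apply: ler_sum => B PB; rewrite /slots PB.
case: ifP => [_|/negbT/small_load_eq0 ->]; last by rewrite mul0r subr0.
by have := truncnS_gt (small_load B t / eps); rewrite -natr1; lra.
Qed.

Lemma small_volume_ge0 t : 0 <= small_volume t.
Proof. by apply: sumr_ge0 => i _; apply: ltW. Qed.

Lemma nnew_lt t : (nnew s K eps t)%:R < small_volume t / (eps - eps ^+ 2) + 1.
Proof.
have eps_gap : 0 < eps - eps ^+ 2.
  by rewrite expr2; have := eps_le_half; have := eps_gt0; nra.
set x := small_volume t / (eps - eps ^+ 2).
have x_ge0 : 0 <= x by rewrite divr_ge0 ?small_volume_ge0 // ltW.
rewrite /nnew -/(small_volume t) -/x natr_absz ger0_norm ?ceil_ge0; last lra.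
by have := real_ceilB1_lt (num_real x); rewrite intrB; lra.
Qed.

Lemma leftover_le t :
  ((nnew s K eps t - \sum_B slots B t)%N)%:R <=
    2 * small_volume t + 2 * (bins_with_small t)%:R.
Proof.
have vol_ge0 := small_volume_ge0 t.
have [bins0|bins_gt0] := posnP (bins_with_small t).
  have vol0 : small_volume t = 0.
    rewrite small_volume_bins big1 // => B PB; apply: small_load_eq0; apply/negP => hitB.
    by move/cards0_eq/setP/(_ B): bins0; rewrite !inE PB hitB.
  by rewrite /nnew -/(small_volume t) vol0 mul0r ceil0 /= sub0n addr_ge0 ?mulr_ge0.
case: (leqP (\sum_B slots B t) (nnew s K eps t)) => [le_sum|/ltnW]; last first.
  by rewrite -subn_eq0 => /eqP ->; rewrite addr_ge0 ?mulr_ge0.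
(* nnew t < S_t/eps + 2 S_t + 1, while the slots number at least S_t/eps - N_t. *)
rewrite natrB //; have := nnew_lt t; have := sum_slots_ge t.
have := ler_div_sub_sqr vol_ge0 eps_gt0 eps_le_half.
have : 1 <= (bins_with_small t)%:R :> R by rewrite ler1n.
lra.
Qed.

Lemma scenario_volume_le k : \sum_(i | k \in K i) s i <= (#|[set B in P | hit k B]|)%:R.
Proof.
have -> : \sum_(i | k \in K i) s i = \sum_(B in P) load s K B k.
  by rewrite -(big_trivIset_cond _ P_trivI) P_cover; apply: eq_bigl => i; rewrite inE.
rewrite -sum1dep_card natr_sum big_mkcondr; apply: ler_sum => B PB.
case: ifP => [_|/negbT/existsPn miss]; first exact: P_load.
by rewrite /load big_pred0 // => i; exact/negbTE/miss.
Qed.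

Lemma sum_small_volume_le : \sum_(t | t != set0) small_volume t <= (d * v)%:R.
Proof.
have -> : \sum_(t | t != set0) small_volume t = \sum_(i | small i && (K i != set0)) s i.
  rewrite [RHS](partition_big K (fun t => t != set0)) => [|i /andP []] //.
  apply: eq_bigr => t t0; apply: eq_bigl => i.
  by case: (K i =P t) => [->|_]; rewrite ?t0 ?andbT ?andbF.
apply: (@le_trans _ _ (\sum_i \sum_(k in K i) s i)).
  rewrite big_mkcond; apply: ler_sum => i _; have s_ge0 := ltW (s_gt0 i).
  case: ifP => [/andP [_ /set0Pn [k ki]]|_]; last by rewrite sumr_ge0.
  by rewrite (bigD1 k) //= lerDl sumr_ge0.
have -> : \sum_i \sum_(k in K i) s i = \sum_k \sum_(i | k \in K i) s i.
  under eq_bigr do rewrite big_mkcond; rewrite exchange_big.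
  by apply: eq_bigr => k _; rewrite [RHS]big_mkcond.
rewrite natrM mulr_natl -[d in _ *+ d]card_ord -sumr_const; apply: ler_sum => k _.
by apply: le_trans (scenario_volume_le k) _; rewrite ler_nat card_hit_le_value.
Qed.

Lemma sum_bins_with_small_le : (\sum_(t | t != set0) bins_with_small t <= 2 ^ d * v)%N.
Proof.
have -> : (2 ^ d = #|{set 'I_d}|)%N by rewrite card_set card_ord.
rewrite -sum_nat_const; apply: (@leq_trans (\sum_(t | t != set0) v)).
  apply: leq_sum => t /set0Pn [k kt]; apply: leq_trans (card_hit_le_value k).
  apply/subset_leq_card/subsetP => B.
  rewrite !inE => /andP [-> /existsP [i /and3P [iB _ /eqP Ki]]].
  by apply/existsP; exists i; rewrite iB Ki.
by rewrite [X in (_ <= X)%N](bigID (fun t => t != set0)) leq_addr.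
Qed.

Lemma sum_leftover_le :
  (\sum_(t | t != set0) (nnew s K eps t - \sum_B slots B t) <= 2 ^ d.+1 * d.+1 * v)%N.
Proof.
rewrite -(ler_nat R) natr_sum.
apply: le_trans (ler_sum _ (fun t _ => leftover_le t)) _.
rewrite big_split /= -!mulr_sumr -natr_sum.
apply: (@le_trans _ _ (2 * (d * v)%:R + 2 * (2 ^ d * v)%:R)).
  by rewrite lerD ?ler_wpM2l ?sum_small_volume_le ?ler_nat ?sum_bins_with_small_le.
rewrite -!natrM -natrD ler_nat expnS; have : (0 < 2 ^ d)%N by rewrite expn_gt0.
nia.
Qed.

Let new_item := {t : {set 'I_d} & 'I_(nnew s K eps t)}.
Let sz := @hat_size R d I s K eps.
Let ty := @hat_type R d I s K eps.

Lemma card_new_of_type t : #|[set u : new_item | tag u == t]| = nnew s K eps t.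
Proof.
rewrite -sum1dep_card; transitivity (\sum_(t' | t' == t) \sum_(j : 'I_(nnew s K eps t')) 1)%N.
  by rewrite sig_big_dep; apply: eq_bigl => u; rewrite andbT.
by rewrite (big_pred1 t) // sum1_card card_ord.
Qed.

Lemma sum_large (Q : pred I) (F : I -> R) :
  \sum_(i : large s eps | Q (val i)) F (val i) = \sum_(i | ~~ small i && Q i) F i.
Proof.
rewrite -(big_sub_cond [pred i | eps ^+ 2 <= s i]).
by apply: eq_bigl => i; rewrite !inE /small -leNgt.
Qed.

Section Packing.
Variable m : nat.
Hypothesis eps_inv : eps^-1 = m%:R.
Variable place : new_item -> option {set I}.
Hypothesis place_fill : forall B t,
  (#|[set u | (tag u == t) && (place u == Some B)]| <= slots B t)%N.
Hypothesis place_left : forall t,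
  (#|[set u | (tag u == t) && (place u == None)]| <=
   #|[set u : new_item | tag u == t]| - \sum_B slots B t)%N.
Let leftover := [set u : new_item | (place u == None) && (tag u != set0)].
Variables (N : nat) (extra : new_item -> 'I_N).
Hypothesis extra_fill : forall j, (#|[set u in leftover | extra u == j]| <= m)%N.

(* A packing of \hat I is described by labelling its items: the label [inl B]
   stands for bin B of P, the label [inr j] for the j-th extra bin. *)
Let label_new (u : new_item) : {set I} + 'I_N :=
  if place u is Some B then inl B else inr (extra u).
Let label (x : hat_items s K eps) : {set I} + 'I_N :=
  match x with inl i => inl (pblock P (val i)) | inr u => label_new u end.

Lemma sum_label l k : \sum_(x | (label x == l) && (k \in ty x)) sz x =
  \sum_(i : large s eps | (inl (pblock P (val i)) == l) && (k \in K (val i))) s (val i) +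
  \sum_(u | (label_new u == l) && (k \in tag u)) eps.
Proof. exact: big_sumType. Qed.

Lemma label_new_eq_inl u B : (label_new u == inl B) = (place u == Some B).
Proof. by rewrite /label_new; case: (place u). Qed.

Lemma label_inl_hit x B k : label x = inl B -> k \in ty x -> B \in P /\ hit k B.
Proof.
case: x => [i [<-] ki | u /eqP]; last rewrite /= label_new_eq_inl => place_u ku.
  have i_cover : val i \in cover P by rewrite P_cover inE.
  by split; [exact: pblock_mem | apply/existsP; exists (val i); rewrite mem_pblock i_cover].
have : (0 < slots B (tag u))%N.
  apply: leq_trans (place_fill B (tag u)); rewrite card_gt0; apply/set0Pn.
  by exists u; rewrite inE eqxx place_u.
case/slots_gt0 => PB /existsP [i /and3P [iB _ /eqP Ki]]; split => //.
by apply/existsP; exists i; rewrite iB Ki.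
Qed.

Lemma label_new_inr u j k :
  label_new u = inr j -> k \in tag u -> (u \in leftover) && (extra u == j).
Proof.
rewrite /label_new inE; case: (place u) => // -[<-] ku.
by rewrite eqxx andbT; apply/set0Pn; exists k.
Qed.

Lemma load_label_inr j k : \sum_(x | (label x == inr j) && (k \in ty x)) sz x <= 1.
Proof.
rewrite sum_label big_pred0 // add0r.
have -> : 1 = m%:R * eps by rewrite -eps_inv mulVf ?gt_eqF.
apply: sum_const_le; first exact: ltW.
apply: leq_trans (extra_fill j); apply/subset_leq_card/subsetP => u.
by rewrite inE => /andP [/eqP/label_new_inr lu /lu]; rewrite inE.
Qed.

Lemma new_load_le B k : \sum_(u | (label_new u == inl B) && (k \in tag u)) eps <=
  \sum_(i | (i \in B) && (k \in K i) && small i) s i.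
Proof.
apply: (@le_trans _ _ (\sum_(t : {set 'I_d} | k \in t) small_load B t)); last first.
  rewrite [leRHS](partition_big K (fun t : {set 'I_d} => k \in t)) => [|i /andP [/andP []]] //.
  apply/ler_sum => t kt; rewrite le_eqVlt; apply/orP; left; apply/eqP/eq_bigl => i.
  by case: (K i =P t) => [->|]; rewrite ?kt ?andbT ?andbF ?andbA.
rewrite (partition_big tag (fun t : {set 'I_d} => k \in t)) => [|u /andP []] //.
apply: ler_sum => t kt; apply: le_trans (slots_le B t).
apply: sum_const_le; first exact: ltW.
apply: leq_trans (place_fill B t); apply/subset_leq_card/subsetP => u.
by rewrite unfold_in !inE label_new_eq_inl => /andP [/andP [-> _] ->].
Qed.

Lemma load_label_inl B k : \sum_(x | (label x == inl B) && (k \in ty x)) sz x <= 1.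
Proof.
have [PB|nPB] := boolP (B \in P); last first.
  rewrite big_pred0 ?ler01 // => x; apply: contraNF nPB => /andP [/eqP lx kx].
  exact: (label_inl_hit lx kx).1.
have in_B i : (pblock P i == B) = (i \in B).
  apply/eqP/idP => [<-|]; last exact: def_pblock.
  by rewrite mem_pblock P_cover inE.
apply: le_trans (P_load k PB); rewrite sum_label.
rewrite (sum_large (fun i => (inl (pblock P i) == inl B :> {set I} + 'I_N) && (k \in K i))).
rewrite /load [leRHS](bigID small) /= [leRHS]addrC.
apply: lerD; last exact: new_load_le.
rewrite (eq_bigl (fun i => (i \in B) && (k \in K i) && ~~ small i)) => [|i]; first exact: lexx.
by rewrite -[_ == inl B]/(pblock P i == B) in_B; case: (small i); rewrite ?andbT ?andbF.
Qed.

Lemma card_leftover :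
  (#|leftover| <= \sum_(t | t != set0) (nnew s K eps t - \sum_B slots B t))%N.
Proof.
rewrite -sum1_card (partition_big tag (fun t => t != set0)) => [|u]; last first.
  by rewrite inE => /andP [].
apply: leq_sum => t _; rewrite sum1dep_card -card_new_of_type.
apply: leq_trans (place_left t); apply/subset_leq_card/subsetP => u.
by rewrite !inE => /andP [/andP [-> _] ->].
Qed.

Lemma OPT_hat_le_bins : (OPT sz ty <= v + N)%N.
Proof.
have label_load l k : \sum_(x | (label x == l) && (k \in ty x)) sz x <= 1.
  by case: l => [B|j]; [exact: load_label_inl | exact: load_label_inr].
apply: leq_trans (OPT_le_labelling label_load) _.
apply/bigmax_leqP => k _; rewrite card_set_sum leq_add //.
  apply: leq_trans (card_hit_le_value k); apply/subset_leq_card/subsetP => B.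
  rewrite !inE => /existsP [x /andP [/eqP lx kx]].
  by case: (label_inl_hit lx kx) => -> ->.
by apply: leq_trans (max_card _) _; rewrite card_ord.
Qed.
End Packing.

Lemma OPT_hat_le_value m : eps^-1 = m%:R ->
  (OPT sz ty)%:R <= (1 + (2 ^ d.+1)%:R * (d.+1)%:R * eps) * v%:R + 1.
Proof.
move=> eps_inv; have m_gt0 : (0 < m)%N by rewrite -(ltr0n R) -eps_inv invr_gt0.
have [place [place_fill place_left]] := fill_bins_by_colour (tag : new_item -> _) slots.
set leftover := [set u | (place u == None) && (tag u != set0)].
have [extra extra_fill] := split_into_chunks leftover m_gt0.
have OPT_le := OPT_hat_le_bins eps_inv place_fill extra_fill.
have leftover_le := leq_trans (card_leftover place_left) sum_leftover_le.
have chunks_le n : (n %/ m)%:R <= n%:R * eps.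
  by rewrite -[eps]invrK eps_inv ler_pdivlMr ?ltr0n // -natrM ler_nat leq_divM.
have := chunks_le #|leftover|; move: leftover_le OPT_le.
rewrite -!(ler_nat R) -addn1 !natrD !natrM => /(ler_wpM2r (ltW eps_gt0)).
lra.
Qed.
End Rounding.

Unset Implicit Arguments.

Theorem lemma8 (R : archiRealFieldType) (d : nat) (I : finType)
  (s : I -> R) (K : I -> {set 'I_d}) (eps : R) :
  (forall i, 0 < s i <= 1) ->
  0 < eps -> eps <= 4^-1 -> (exists m : nat, eps^-1 = m%:R) ->
  (OPT (@hat_size R d I s K eps) (@hat_type R d I s K eps))%:R
    <= (1 + (2 ^ d.+1)%:R * (d.+1)%:R * eps) * (OPT s K)%:R + 1.
Proof.
move=> s_bounds eps_gt0 eps_le [m eps_inv].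
have s_gt0 i : 0 < s i by case/andP: (s_bounds i).
have [P P_feasible <-] := OPT_attained K (fun i => (andP (s_bounds i)).2).
by apply: OPT_hat_le_value eps_inv => //; lra.
Qed.
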